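(* Let $m\in\mathbb{N}^+$ and $p\in(1,p_S)$. Then $$|u^{(m)}_p(x)|\leq \frac{M^{(m)}_{0,p}}{\Big[1+\frac{(M^{(m)}_{0,p})^{p-1}}{N(N-2)}|x|^2\Big]^{\frac{N-2}{2}}}\qquad\text{for all }x\in B^{(m)}_{0,p}.$$
   Context: Standing setting: $N\geq3$, $B$ unit ball of $\mathbb{R}^N$ centered at $0$, $p_S=\frac{N+2}{N-2}$. $u^{(m)}_p$ is the unique radial solution of $-\Delta u=|u|^{p-1}u$ in $B$, $u=0$ on $\partial B$, with exactly $m$ nodal regions and $u^{(m)}_p(0)>0$. $r^{(m)}_{1,p}$ is its first nodal radius if $m\geq2$ and $r^{(m)}_{1,p}=1$ if $m=1$; $B^{(m)}_{0,p}=\{|x|<r^{(m)}_{1,p}\}$; $M^{(m)}_{0,p}=u^{(m)}_p(0)=\max_{B^{(m)}_{0,p}}|u^{(m)}_p|$. *)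

From Stdlib Require Import Reals Lra Lia.
Open Scope R_scope.

(* Points of R^N are represented as functions nat -> R; only the first N
   coordinates (indices 0..N-1) are ever used. *)
Definition pt := nat -> R.

Fixpoint rsum (n : nat) (f : nat -> R) : R :=
  match n with
  | O => 0
  | S k => rsum k f + f k
  end.

Definition normN (N : nat) (x : pt) : R := sqrt (rsum N (fun i => x i ^ 2)).

Definition distN (N : nat) (x y : pt) : R := normN N (fun k => y k - x k).

Definition origin : pt := fun _ => 0.

Definition shift (x : pt) (i : nat) (t : R) : pt :=
  fun k => if Nat.eqb k i then x k + t else x k.

Definition partial_at (f : pt -> R) (i : nat) (x : pt) (l : R) : Prop :=
  derivable_pt_lim (fun t => f (shift x i t)) 0 l.

Definition in_ball (N : nat) (x : pt) : Prop := normN N x < 1.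
Definition in_cball (N : nat) (x : pt) : Prop := normN N x <= 1.

Definition contN_at (N : nat) (f : pt -> R) (x : pt) : Prop :=
  forall eps, eps > 0 -> exists delta, delta > 0 /\
    forall y, distN N x y < delta -> Rabs (f y - f x) < eps.

Definition contN_cball_at (N : nat) (f : pt -> R) (x : pt) : Prop :=
  forall eps, eps > 0 -> exists delta, delta > 0 /\
    forall y, in_cball N y -> distN N x y < delta -> Rabs (f y - f x) < eps.

(* Classical solution of  -Δu = |u|^{p-1} u  in B,  u = 0 on ∂B. *)
Definition is_LE_solution (N : nat) (p : R) (u : pt -> R) : Prop :=
  (forall x, normN N x = 1 -> u x = 0) /\
  (forall x, in_cball N x -> contN_cball_at N u x) /\
  exists (d1 : nat -> pt -> R) (d2 : nat -> nat -> pt -> R),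
    forall x, in_ball N x ->
      (forall i j, (i < N)%nat -> (j < N)%nat ->
        partial_at u i x (d1 i x) /\
        partial_at (d1 i) j x (d2 i j x) /\
        contN_at N (d2 i j) x) /\
      - rsum N (fun i => d2 i i x) = Rpower (Rabs (u x)) (p - 1) * u x.

Definition radial (N : nat) (u : pt -> R) : Prop :=
  exists phi : R -> R, forall x, u x = phi (normN N x).

Definition path_connected_in (N : nat) (S : pt -> Prop) (x y : pt) : Prop :=
  exists g : R -> pt,
    (forall i, (i < N)%nat -> continuity (fun t => g t i)) /\
    (forall i, (i < N)%nat -> g 0 i = x i /\ g 1 i = y i) /\
    (forall t, 0 <= t <= 1 -> S (g t)).

Definition nodal_set (N : nat) (u : pt -> R) : pt -> Prop :=
  fun x => in_ball N x /\ u x <> 0.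

(* {u ≠ 0} ∩ B has exactly m connected (= path-connected, the set being open)
   components *)
Definition num_nodal_regions (N : nat) (u : pt -> R) (m : nat) : Prop :=
  exists reps : nat -> pt,
    (forall k, (k < m)%nat -> nodal_set N u (reps k)) /\
    (forall k l, (k < m)%nat -> (l < m)%nat -> k <> l ->
       ~ path_connected_in N (nodal_set N u) (reps k) (reps l)) /\
    (forall x, nodal_set N u x ->
       exists k, (k < m)%nat /\ path_connected_in N (nodal_set N u) x (reps k)).

Definition first_nodal_radius (N : nat) (u : pt -> R) (m : nat) (r1 : R) : Prop :=
  (m = 1%nat /\ r1 = 1) \/
  ((2 <= m)%nat /\ 0 < r1 < 1 /\
   (forall x, normN N x < r1 -> u x <> 0) /\
   (forall x, normN N x = r1 -> u x = 0)).

Definition p_S (N : nat) : R := (INR N + 2) / (INR N - 2).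

From Stdlib Require Import Reals Lra Lia FunctionalExtensionality.
Open Scope R_scope.

(* Write u(x) = phi(|x|).  Then phi'' + (N-1)/r phi' = -|phi|^(p-1) phi, phi'(0) = 0, and phi > 0
   on [0, r1): by the intermediate value theorem below a first nodal radius, and, when there
   is a single nodal region, because a negative value would lie in a second one.  There
   phi' < 0, and for p < (N+2)/(N-2) the Pohozaev-type function
     Q = r^N phi^(p+1) + N r^(N-1) phi phi' + N/(N-2) r^N phi'^2
   is nondecreasing from Q(0) = 0, hence nonnegative.  The derivative of
   G = -phi'/(r phi^(N/(N-2))) has the sign of Q, so G >= G(0+) = phi(0)^(p - N/(N-2)) / N.  Since
   (phi^(-2/(N-2)))' = 2/(N-2) r G, integration gives
     phi(r)^(-2/(N-2)) >= phi(0)^(-2/(N-2)) (1 + phi(0)^(p-1) r^2 / (N (N-2))). *)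

(** * One-variable calculus *)

Lemma continuity_pt_eps f x :
  continuity_pt f x <->
  forall eps, eps > 0 -> exists delta, delta > 0 /\
    forall y, Rabs (y - x) < delta -> Rabs (f y - f x) < eps.
Proof.
  unfold continuity_pt, continue_in, limit1_in, limit_in, D_x, no_cond; simpl.
  unfold R_dist; split.
  - intros H eps Heps. destruct (H eps Heps) as [d [Hd H1]].
    exists d; split; [exact Hd|]. intros y Hy.
    destruct (Req_dec y x) as [->|Hne].
    + rewrite Rminus_diag, Rabs_R0; lra.
    + apply H1; auto.
  - intros H eps Heps. destruct (H eps Heps) as [d [Hd H1]].
    exists d; split; [exact Hd|]. intros y [_ Hy]; auto.
Qed.

Lemma derive_eq f x l l' : derivable_pt_lim f x l -> l = l' -> derivable_pt_lim f x l'.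
Proof. now intros H <-. Qed.

(* The Stdlib differentiation rules, restated on lambda terms so that they apply to
   [fun t => ...] goals without unfolding [plus_fct], [mult_fct], ... *)
Lemma derive_const c x : derivable_pt_lim (fun _ => c) x 0.
Proof. apply derivable_pt_lim_const. Qed.

Lemma derive_id x : derivable_pt_lim (fun t => t) x 1.
Proof. apply derivable_pt_lim_id. Qed.

Lemma derive_plus f g x a b : derivable_pt_lim f x a -> derivable_pt_lim g x b ->
  derivable_pt_lim (fun t => f t + g t) x (a + b).
Proof. apply (derivable_pt_lim_plus f g). Qed.

Lemma derive_minus f g x a b : derivable_pt_lim f x a -> derivable_pt_lim g x b ->
  derivable_pt_lim (fun t => f t - g t) x (a - b).
Proof. apply (derivable_pt_lim_minus f g). Qed.

Lemma derive_mult f g x a b : derivable_pt_lim f x a -> derivable_pt_lim g x b ->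
  derivable_pt_lim (fun t => f t * g t) x (a * g x + f x * b).
Proof. apply (derivable_pt_lim_mult f g). Qed.

Lemma derive_comp f g x a b : derivable_pt_lim g x b -> derivable_pt_lim f (g x) a ->
  derivable_pt_lim (fun t => f (g t)) x (a * b).
Proof. apply (derivable_pt_lim_comp g f). Qed.

Lemma derive_pow f x a n : derivable_pt_lim f x a ->
  derivable_pt_lim (fun t => f t ^ n) x (INR n * f x ^ pred n * a).
Proof. intros; apply (derive_comp (fun y => y ^ n) f); auto using derivable_pt_lim_pow. Qed.

Lemma derive_Rpower f x a y : 0 < f x -> derivable_pt_lim f x a ->
  derivable_pt_lim (fun t => Rpower (f t) y) x (y * Rpower (f x) (y - 1) * a).
Proof. intros; apply (derive_comp (fun z => Rpower z y) f); auto using derivable_pt_lim_power. Qed.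

Lemma derive_div f g x a b : g x <> 0 -> derivable_pt_lim f x a -> derivable_pt_lim g x b ->
  derivable_pt_lim (fun t => f t / g t) x ((a * g x - b * f x) / g x ^ 2).
Proof.
  intros. rewrite <- Rsqr_pow2. apply (derivable_pt_lim_div f g); auto.
Qed.

Lemma derive_local f g x l delta : delta > 0 ->
  (forall t, Rabs (t - x) < delta -> f t = g t) ->
  derivable_pt_lim f x l -> derivable_pt_lim g x l.
Proof.
  intros Hd Heq H eps Heps. destruct (H eps Heps) as [d Hd'].
  assert (Hm : 0 < Rmin d delta) by (apply Rmin_pos; [apply cond_pos| lra]).
  exists (mkposreal _ Hm). intros h Hh Hh2. simpl in Hh2.
  rewrite <- (Heq (x + h)), <- (Heq x).
  - apply Hd'; auto. apply Rlt_le_trans with (1 := Hh2), Rmin_l.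
  - rewrite Rminus_diag, Rabs_R0; lra.
  - replace (x + h - x) with h by ring. apply Rlt_le_trans with (1 := Hh2), Rmin_r.
Qed.

Lemma derive_shift f r l :
  derivable_pt_lim (fun t => f (r + t)) 0 l <-> derivable_pt_lim f r l.
Proof.
  split; intros H eps Heps; destruct (H eps Heps) as [d Hd]; exists d; intros h Hh Hh2;
    specialize (Hd h Hh Hh2); rewrite ?Rplus_0_l, ?Rplus_0_r in *; exact Hd.
Qed.

Lemma le_of_derive_nonneg h h' a b : a <= b ->
  (forall c, a <= c <= b -> derivable_pt_lim h c (h' c)) ->
  (forall c, a < c < b -> 0 <= h' c) -> h a <= h b.
Proof.
  intros Hab Hd Hp. destruct (Rle_lt_or_eq_dec _ _ Hab) as [Hlt|<-]; [|lra].
  destruct (MVT_cor2 h h' a b Hlt Hd) as [c [Hc Hc2]].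
  specialize (Hp c Hc2). nra.
Qed.

Lemma le_of_derive_nonpos h h' a b : a <= b ->
  (forall c, a <= c <= b -> derivable_pt_lim h c (h' c)) ->
  (forall c, a < c < b -> h' c <= 0) -> h b <= h a.
Proof.
  intros Hab Hd Hp. destruct (Rle_lt_or_eq_dec _ _ Hab) as [Hlt|<-]; [|lra].
  destruct (MVT_cor2 h h' a b Hlt Hd) as [c [Hc Hc2]].
  specialize (Hp c Hc2). nra.
Qed.

Lemma lt_of_derive_neg h h' a b : a < b ->
  (forall c, a <= c <= b -> derivable_pt_lim h c (h' c)) ->
  (forall c, a < c < b -> h' c < 0) -> h b < h a.
Proof.
  intros Hab Hd Hp.
  destruct (MVT_cor2 h h' a b Hab Hd) as [c [Hc Hc2]].
  specialize (Hp c Hc2). nra.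
Qed.

Lemma Rpower_pos x y : 0 < Rpower x y.
Proof. apply exp_pos. Qed.

Lemma Rpower_minus1 x y : 0 < x -> Rpower x (y - 1) = Rpower x y / x.
Proof.
  intros Hx. replace y with ((y - 1) + 1) at 2 by ring.
  rewrite Rpower_plus, Rpower_1 by exact Hx. field. lra.
Qed.

Lemma Rpower_abs_mult x p : 0 < x -> Rpower (Rabs x) (p - 1) * x = Rpower x p.
Proof.
  intros Hx. rewrite Rabs_pos_eq, Rpower_minus1 by lra. field. lra.
Qed.

Lemma pow_pred x n : (0 < n)%nat -> x ^ n = x * x ^ pred n.
Proof. now destruct n; [lia|]. Qed.

Lemma INR_pred n : (0 < n)%nat -> INR (pred n) = INR n - 1.
Proof. intros; destruct n; [lia|]. rewrite S_INR. simpl. ring. Qed.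

(** * The radial equation *)

Record radial_ode (N : nat) (p : R) (phi dphi d2phi : R -> R) : Prop := {
  radial_ode_deriv : forall r, 0 <= r < 1 -> derivable_pt_lim phi r (dphi r);
  radial_ode_deriv2 : forall r, 0 <= r < 1 -> derivable_pt_lim dphi r (d2phi r);
  radial_ode_dphi_0 : dphi 0 = 0;
  radial_ode_eq : forall r, 0 < r < 1 ->
    - (d2phi r + (INR N - 1) * (dphi r / r)) = Rpower (Rabs (phi r)) (p - 1) * phi r;
  (* at the centre the Laplacian of a radial function is N phi''(0) *)
  radial_ode_eq_0 : - (INR N * d2phi 0) = Rpower (Rabs (phi 0)) (p - 1) * phi 0 }.
Arguments radial_ode_deriv {N p phi dphi d2phi}.
Arguments radial_ode_deriv2 {N p phi dphi d2phi}.
Arguments radial_ode_dphi_0 {N p phi dphi d2phi}.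
Arguments radial_ode_eq {N p phi dphi d2phi}.
Arguments radial_ode_eq_0 {N p phi dphi d2phi}.

Section RadialOde.

Variables (N : nat) (p : R) (phi dphi d2phi : R -> R).
Hypotheses (N_ge3 : (3 <= N)%nat) (ode : radial_ode N p phi dphi d2phi).

Local Notation n := (INR N).

Let phi_deriv := radial_ode_deriv ode.
Let dphi_deriv := radial_ode_deriv2 ode.

Lemma dphi_neg r : 0 < phi 0 -> 0 < r < 1 -> (forall c, 0 <= c <= r -> 0 <= phi c) ->
  dphi r < 0.
Proof.
  intros Hphi0 Hr Hnn.
  set (W := fun c => c ^ pred N * dphi c).
  set (W' := fun c => INR (pred N) * c ^ pred (pred N) * 1 * dphi c + c ^ pred N * d2phi c).
  assert (HW : forall c, 0 <= c <= r -> derivable_pt_lim W c (W' c)).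
  { intros c Hc. apply derive_mult; [apply (derive_pow (fun t => t)), derive_id|].
    apply dphi_deriv; lra. }
  assert (HW' : forall c, 0 < c <= r ->
                W' c = - c ^ pred N * (Rpower (Rabs (phi c)) (p - 1) * phi c)).
  { intros c Hc. rewrite <- (radial_ode_eq ode c) by lra. unfold W'.
    rewrite INR_pred, (pow_pred c (pred N)) by lia. field. lra. }
  assert (HW'_nonpos : forall c, 0 < c <= r -> W' c <= 0).
  { intros c Hc. rewrite HW' by lra.
    pose proof (Rpower_pos (Rabs (phi c)) (p - 1)). pose proof (Hnn c ltac:(lra)).
    assert (0 < c ^ pred N) by (apply pow_lt; lra).
    assert (0 <= c ^ pred N * (Rpower (Rabs (phi c)) (p - 1) * phi c)) by
      (apply Rmult_le_pos; [lra| apply Rmult_le_pos; lra]).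
    lra. }
  (* near the centre [phi > 0], which makes [W] strictly decreasing there *)
  assert (Hcont : continuity_pt phi 0)
    by (apply derivable_continuous_pt; exists (dphi 0); apply phi_deriv; lra).
  destruct (proj1 (continuity_pt_eps phi 0) Hcont (phi 0) Hphi0) as [d [Hd Hnear]].
  set (t := Rmin (d / 2) r).
  assert (Ht : 0 < t <= r) by (unfold t; split; [apply Rmin_pos; lra| apply Rmin_r]).
  assert (Htd : t < d) by (unfold t; apply Rle_lt_trans with (d / 2); [apply Rmin_l| lra]).
  assert (HWt : W t < W 0).
  { apply (lt_of_derive_neg W W'); [lra| intros c Hc; apply HW; lra|].
    intros c Hc. rewrite HW' by lra.
    assert (Hpc : 0 < phi c).
    { specialize (Hnear c ltac:(rewrite Rminus_0_r, Rabs_pos_eq; lra)).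
      apply Rabs_def2 in Hnear. lra. }
    pose proof (Rpower_pos (Rabs (phi c)) (p - 1)).
    assert (0 < c ^ pred N) by (apply pow_lt; lra).
    assert (0 < c ^ pred N * (Rpower (Rabs (phi c)) (p - 1) * phi c)) by
      (repeat apply Rmult_lt_0_compat; auto).
    lra. }
  assert (HWr : W r <= W t).
  { apply (le_of_derive_nonpos W W'); [lra| intros c Hc; apply HW; lra|].
    intros c Hc. apply HW'_nonpos. lra. }
  assert (HW0 : W 0 = 0) by (unfold W; rewrite pow_i by lia; ring).
  unfold W in HWt, HWr, HW0. assert (0 < r ^ pred N) by (apply pow_lt; lra).
  destruct (Rlt_or_le (dphi r) 0) as [Hneg|Hnonneg]; [exact Hneg|].
  assert (0 <= r ^ pred N * dphi r) by (apply Rmult_le_pos; lra). lra.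
Qed.

Lemma phi_pos_of_nonneg : 0 < phi 0 -> (forall c, 0 <= c < 1 -> 0 <= phi c) ->
  forall s, 0 <= s < 1 -> 0 < phi s.
Proof.
  intros Hphi0 Hnn s Hs. destruct (Rle_lt_or_eq_dec _ _ (Hnn s Hs)) as [Hpos|Hzero]; [exact Hpos|].
  exfalso.
  assert (Hs0 : 0 < s) by (destruct (Rle_lt_or_eq_dec 0 s ltac:(lra)) as [|<-]; lra).
  (* [s] is an interior minimum of [phi] on [(0, 1)], so [dphi s = 0] *)
  assert (Hcrit : dphi s = 0).
  { apply (deriv_minimum phi 0 1 s (exist _ (dphi s) (phi_deriv s Hs))); try lra.
    intros x Hx0 Hx1. rewrite <- Hzero. apply Hnn. lra. }
  assert (dphi s < 0) by (apply dphi_neg; try lra; intros c Hc; apply Hnn; lra).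
  lra.
Qed.

Lemma d2phi_eq c : 0 < c < 1 -> 0 < phi c ->
  d2phi c = - (n - 1) * (dphi c / c) - Rpower (phi c) p.
Proof.
  intros Hc Hpc. pose proof (radial_ode_eq ode c Hc) as E.
  rewrite Rpower_abs_mult in E by exact Hpc. lra.
Qed.

Section PositiveProfile.

Variable R1 : R.
Hypotheses (R1_range : 0 < R1 <= 1) (phi_pos : forall s, 0 <= s < R1 -> 0 < phi s)
  (p_subcritical : p < (n + 2) / (n - 2)).

Let n_gt2 : 2 < n.
Proof.
  replace 2 with (INR 2) by reflexivity. apply lt_INR. lia.
Qed.

Definition pohozaev r :=
  r ^ N * (Rpower (phi r) p * phi r) + n * r ^ pred N * phi r * dphi r
  + n / (n - 2) * r ^ N * dphi r ^ 2.

Lemma dphi_neg_below r : 0 < r < R1 -> dphi r < 0.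
Proof.
  intros Hr. apply dphi_neg; try lra.
  - apply phi_pos; lra.
  - intros c Hc. left. apply phi_pos. lra.
Qed.

Lemma pohozaev_nonneg r : 0 <= r < R1 -> 0 <= pohozaev r.
Proof.
  intros Hr.
  set (Q' := fun c => n * c ^ pred N * (Rpower (phi c) p * phi c)
      + c ^ N * ((p + 1) * Rpower (phi c) p * dphi c)
      + n * ((n - 1) * c ^ pred (pred N) * phi c * dphi c + c ^ pred N * dphi c ^ 2
             + c ^ pred N * phi c * d2phi c)
      + n / (n - 2) * (n * c ^ pred N * dphi c ^ 2 + 2 * c ^ N * dphi c * d2phi c)).
  assert (HQ : forall c, 0 <= c <= r -> derivable_pt_lim pohozaev c (Q' c)).
  { intros c Hc. pose proof (phi_pos c ltac:(lra)) as Hpc.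
    assert (Hphi : derivable_pt_lim phi c (dphi c)) by (apply phi_deriv; lra).
    assert (Hdphi : derivable_pt_lim dphi c (d2phi c)) by (apply dphi_deriv; lra).
    assert (Hpow : forall k, derivable_pt_lim (fun t => t ^ k) c (INR k * c ^ pred k))
      by (intros; apply derivable_pt_lim_pow).
    unfold pohozaev. eapply derive_eq.
    - repeat apply derive_plus.
      + apply derive_mult; [apply Hpow|].
        apply derive_mult; [apply derive_Rpower|]; eassumption.
      + repeat apply derive_mult; eauto using derive_const.
      + apply derive_mult; [apply derive_mult; eauto using derive_const|].
        apply derive_pow; eassumption.
    - unfold Q'. rewrite Rpower_minus1, INR_pred by (lra || lia). simpl. field. lra. }
  assert (HQ'_nonneg : forall c, 0 < c < r -> 0 <= Q' c).
  { intros c Hc. pose proof (phi_pos c ltac:(lra)) as Hpc.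
    assert (E : Q' c = (p - (n + 2) / (n - 2)) * c ^ N * Rpower (phi c) p * dphi c).
    { unfold Q'. rewrite d2phi_eq by lra.
      rewrite (pow_pred c N), (pow_pred c (pred N)) by lia. field. lra. }
    rewrite E. pose proof (Rpower_pos (phi c) p).
    pose proof (dphi_neg_below c ltac:(lra)).
    assert (0 < c ^ N) by (apply pow_lt; lra).
    assert (0 < ((n + 2) / (n - 2) - p) * c ^ N * Rpower (phi c) p)
      by (repeat apply Rmult_lt_0_compat; lra).
    nra. }
  replace 0 with (pohozaev 0)
    by (unfold pohozaev; rewrite !pow_i by lia; ring).
  apply (le_of_derive_nonneg _ Q'); [lra| exact HQ| exact HQ'_nonneg].
Qed.

Definition ratio r := - dphi r / (r * Rpower (phi r) (n / (n - 2))).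

Lemma ratio_nondecreasing s r : 0 < s <= r -> r < R1 -> ratio s <= ratio r.
Proof.
  intros Hs Hr. set (b := n / (n - 2)).
  apply (le_of_derive_nonneg ratio
    (fun c => pohozaev c * Rpower (phi c) b / (phi c * c ^ pred N * (c * Rpower (phi c) b) ^ 2)));
    [lra| |].
  - intros c Hc. pose proof (phi_pos c ltac:(lra)) as Hpc. pose proof (Rpower_pos (phi c) b).
    assert (Hphi : derivable_pt_lim phi c (dphi c)) by (apply phi_deriv; lra).
    unfold ratio. eapply derive_eq.
    + apply derive_div.
      * apply Rgt_not_eq, Rmult_lt_0_compat; [lra| apply Rpower_pos].
      * apply (derivable_pt_lim_opp dphi), dphi_deriv. lra.
      * apply derive_mult; [apply derive_id| apply derive_Rpower; eassumption].
    + fold b. unfold pohozaev. rewrite d2phi_eq, Rpower_minus1 by lra.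
      rewrite (pow_pred c N), (pow_pred c (pred N)) by lia.
      assert (c ^ pred (pred N) <> 0) by (apply pow_nonzero; lra).
      unfold b in *. field. repeat split; lra.
  - intros c Hc. pose proof (phi_pos c ltac:(lra)). pose proof (Rpower_pos (phi c) b).
    pose proof (pohozaev_nonneg c ltac:(lra)).
    assert (0 < c ^ pred N) by (apply pow_lt; lra).
    apply Rmult_le_pos; [apply Rmult_le_pos; lra|].
    left. apply Rinv_0_lt_compat. repeat apply Rmult_lt_0_compat; try apply pow_lt; nra.
Qed.

(* [ratio] is [kf c / c] for a function [kf] vanishing at [0], whose derivative there is the
   value forced on the left by the equation at the centre *)
Lemma ratio_ge_center r : 0 < r < R1 -> Rpower (phi 0) (p - n / (n - 2)) / n <= ratio r.
Proof.
  intros Hr. set (b := n / (n - 2)). set (M := phi 0).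
  assert (HM : 0 < M) by (apply phi_pos; lra).
  set (kf := fun c => - dphi c * Rpower (phi c) (- b)).
  assert (Hkf : derivable_pt_lim kf 0 (Rpower M (p - b) / n)).
  { eapply derive_eq.
    - apply derive_mult; [apply (derivable_pt_lim_opp dphi), dphi_deriv; lra|].
      apply derive_Rpower; [exact HM| apply phi_deriv; lra].
    - unfold opp_fct. fold M. rewrite (radial_ode_dphi_0 ode).
      unfold Rminus. rewrite (Rpower_plus p (- b) M).
      pose proof (radial_ode_eq_0 ode) as E. fold M in E.
      rewrite Rpower_abs_mult in E by exact HM. rewrite <- E. field. lra. }
  assert (Hkf_ratio : forall c, 0 < c < R1 -> kf c / c = ratio c).
  { intros c Hc. pose proof (phi_pos c ltac:(lra)). pose proof (Rpower_pos (phi c) b).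
    unfold kf, ratio. rewrite Rpower_Ropp. fold b. field. lra. }
  destruct (Rle_or_lt (Rpower M (p - b) / n) (ratio r)) as [Hle|Hlt]; [exact Hle|]. exfalso.
  destruct (Hkf (Rpower M (p - b) / n - ratio r) ltac:(lra)) as [d Hd].
  set (h := Rmin (d / 2) r).
  assert (Hh : 0 < h <= r)
    by (unfold h; split; [apply Rmin_pos; [destruct d; simpl; lra| lra]| apply Rmin_r]).
  assert (Hhd : Rabs h < d) by (rewrite Rabs_pos_eq by lra; unfold h;
     apply Rle_lt_trans with (d / 2); [apply Rmin_l| destruct d; simpl; lra]).
  specialize (Hd h ltac:(lra) Hhd).
  assert (Hk0 : kf 0 = 0) by (unfold kf; rewrite (radial_ode_dphi_0 ode); ring).
  rewrite Rplus_0_l, Hk0, Rminus_0_r, Hkf_ratio in Hd by lra.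
  apply Rabs_def2 in Hd. pose proof (ratio_nondecreasing h r Hh ltac:(lra)). lra.
Qed.

Lemma profile_bound r : 0 <= r < R1 ->
  phi r <= phi 0 / Rpower (1 + Rpower (phi 0) (p - 1) / (n * (n - 2)) * r ^ 2) ((n - 2) / 2).
Proof.
  intros Hr. set (M := phi 0). set (e := 2 / (n - 2)).
  assert (HM : 0 < M) by (apply phi_pos; lra).
  assert (He : 0 < e) by (apply Rdiv_lt_0_compat; lra).
  set (A := Rpower M (p - 1) / (n * (n - 2))).
  assert (HA : 0 <= A) by (left; apply Rdiv_lt_0_compat; [apply Rpower_pos| nra]).
  set (Z := fun c => Rpower (phi c) (- e) - Rpower M (- e) * A * c ^ 2).
  assert (HZ : Z 0 <= Z r).
  { apply (le_of_derive_nonneg Z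
      (fun c => - e * Rpower (phi c) (- e - 1) * dphi c - Rpower M (- e) * A * (2 * c)));
      [lra| |].
    - intros c Hc. pose proof (phi_pos c ltac:(lra)).
      eapply derive_eq; [apply derive_minus|].
      + apply derive_Rpower; [assumption| apply phi_deriv; lra].
      + apply derive_mult; [apply derive_const| apply (derive_pow (fun t => t)), derive_id].
      + simpl. ring.
    - intros c Hc. pose proof (phi_pos c ltac:(lra)).
      pose proof (Rpower_pos (phi c) (n / (n - 2))).
      assert (E : - e * Rpower (phi c) (- e - 1) * dphi c - Rpower M (- e) * A * (2 * c)
                  = e * c * (ratio c - Rpower M (p - n / (n - 2)) / n)).
      { unfold ratio, A. replace (- e - 1) with (- (n / (n - 2))) by (unfold e; field; lra).
        replace (p - n / (n - 2)) with (- e + (p - 1)) by (unfold e; field; lra).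
        rewrite Rpower_plus, Rpower_Ropp. unfold e. field. repeat split; lra. }
      rewrite E. pose proof (ratio_ge_center c ltac:(lra)) as Hge. fold M in Hge.
      apply Rmult_le_pos; [apply Rmult_le_pos|]; lra. }
  unfold Z in HZ. rewrite pow_i, Rmult_0_r, Rminus_0_r in HZ by lia. fold M in HZ.
  set (T := 1 + A * r ^ 2).
  assert (HT : 1 <= T) by (unfold T; pose proof (pow2_ge_0 r); nra).
  pose proof (phi_pos r Hr) as Hpr. pose proof (Rpower_pos M (- e)).
  assert (Hle : Rpower M (- e) * T <= Rpower (phi r) (- e)) by (unfold T; nra).
  assert (Hpow : Rpower (Rpower M (- e) * T) (/ e) <= Rpower (Rpower (phi r) (- e)) (/ e))
    by (apply Rle_Rpower_l; [left; apply Rinv_0_lt_compat, He| split; [nra| exact Hle]]).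
  rewrite <- Rpower_mult_distr, !Rpower_mult in Hpow by lra.
  replace (- e * / e) with (- (1)) in Hpow by (field; lra).
  replace (/ e) with ((n - 2) / 2) in Hpow by (unfold e; field; lra).
  rewrite !Rpower_Ropp, !Rpower_1 in Hpow by lra.
  pose proof (Rpower_pos T ((n - 2) / 2)).
  replace (M / Rpower T ((n - 2) / 2)) with (/ (/ M * Rpower T ((n - 2) / 2))) by (field; lra).
  rewrite <- (Rinv_inv (phi r)). apply Rinv_le_contravar; [| exact Hpow].
  apply Rmult_lt_0_compat; [apply Rinv_0_lt_compat|]; lra.
Qed.

End PositiveProfile.

End RadialOde.

(** * Radial solutions *)

Lemma rsum_ext n f g : (forall k, (k < n)%nat -> f k = g k) -> rsum n f = rsum n g.
Proof.
  induction n as [|n IH]; simpl; intros H; [reflexivity|].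
  rewrite IH, H by (intros; apply H || lia; lia). reflexivity.
Qed.

Lemma rsum_plus n f g : rsum n (fun k => f k + g k) = rsum n f + rsum n g.
Proof. induction n as [|n IH]; simpl; [ring| rewrite IH; ring]. Qed.

Lemma rsum_zero n f : (forall k, (k < n)%nat -> f k = 0) -> rsum n f = 0.
Proof.
  induction n as [|n IH]; simpl; intros H; [reflexivity|].
  rewrite IH, H by (intros; apply H || lia; lia). ring.
Qed.

Lemma rsum_single n f j : (j < n)%nat -> (forall k, (k < n)%nat -> k <> j -> f k = 0) ->
  rsum n f = f j.
Proof.
  induction n as [|n IH]; intros Hj H; [lia|]. simpl.
  destruct (Nat.eq_dec j n) as [->|Hne].
  - rewrite rsum_zero; [ring|]. intros k Hk; apply H; lia.
  - rewrite IH, (H n) by (try lia; intros; apply H; lia). ring.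
Qed.

Lemma rsum_const_tail n f c : (1 <= n)%nat -> (forall k, (0 < k < n)%nat -> f k = c) ->
  rsum n f = f 0%nat + INR (n - 1) * c.
Proof.
  induction n as [|n IH]; intros Hn H; [lia|]. simpl.
  destruct n as [|n]; [simpl; ring|].
  rewrite IH, (H (S n)) by (try lia; intros; apply H; lia).
  replace (S n - 0)%nat with (S (S n - 1)) by lia. rewrite (S_INR (S n - 1)). ring.
Qed.

Lemma rsum_nonneg n f : (forall k, (k < n)%nat -> 0 <= f k) -> 0 <= rsum n f.
Proof.
  induction n as [|n IH]; simpl; intros H; [lra|].
  pose proof (H n ltac:(lia)). assert (0 <= rsum n f) by (apply IH; intros; apply H; lia).
  lra.
Qed.

Definition ray (r : R) : pt := fun k => if Nat.eqb k 0 then r else 0.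

Lemma normN_nonneg N x : 0 <= normN N x.
Proof. apply sqrt_pos. Qed.

Lemma normN_ext N x y : (forall k, (k < N)%nat -> x k = y k) -> normN N x = normN N y.
Proof. intros H. unfold normN. f_equal. apply rsum_ext. intros k Hk; rewrite H; auto. Qed.

Lemma sqrt_pow2_abs r : sqrt (r ^ 2) = Rabs r.
Proof. rewrite <- Rsqr_pow2. apply sqrt_Rsqr_abs. Qed.

Lemma normN_ray N r : (1 <= N)%nat -> normN N (ray r) = Rabs r.
Proof.
  intros HN. unfold normN. rewrite (rsum_single N _ 0); [apply sqrt_pow2_abs| lia|].
  intros k _ Hk. unfold ray. destruct (Nat.eqb_spec k 0); [lia| ring].
Qed.

Lemma origin_ray : origin = ray 0.
Proof. apply functional_extensionality; intros k; unfold origin, ray; now destruct Nat.eqb. Qed.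

Lemma normN_shift_origin N i y : (i < N)%nat -> normN N (shift origin i y) = Rabs y.
Proof.
  intros Hi. unfold normN. rewrite (rsum_single N _ i); [| exact Hi|].
  - unfold shift, origin. rewrite Nat.eqb_refl, Rplus_0_l. apply sqrt_pow2_abs.
  - intros k _ Hk. unfold shift, origin. destruct (Nat.eqb_spec k i); [lia| ring].
Qed.

Lemma normN_shift_ray N r i y : (0 < i < N)%nat ->
  normN N (shift (ray r) i y) = sqrt (r ^ 2 + y ^ 2).
Proof.
  intros Hi. unfold normN. f_equal.
  rewrite (rsum_ext N _ (fun k => (if Nat.eqb k 0 then r ^ 2 else 0)
                                  + (if Nat.eqb k i then y ^ 2 else 0))).
  - rewrite rsum_plus, (rsum_single N _ 0), (rsum_single N _ i); try lia.
    + simpl. now rewrite Nat.eqb_refl.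
    + intros k _ Hk. now destruct (Nat.eqb_spec k i).
    + intros k _ Hk. now destruct (Nat.eqb_spec k 0).
  - intros k Hk. unfold shift, ray.
    destruct (Nat.eqb_spec k i), (Nat.eqb_spec k 0); subst; try lia; ring.
Qed.

Lemma shift_shift x i t s : shift (shift x i t) i s = shift x i (t + s).
Proof. apply functional_extensionality; intros k; unfold shift; destruct Nat.eqb; ring. Qed.

Lemma shift_ray r t : shift (ray r) 0 t = ray (r + t).
Proof. apply functional_extensionality; intros k; unfold shift, ray; destruct Nat.eqb; ring. Qed.

Lemma radial_ray N u : (1 <= N)%nat -> radial N u -> forall x, u x = u (ray (normN N x)).
Proof.
  intros HN [phi Hphi] x. rewrite !Hphi, normN_ray, Rabs_pos_eq by auto using normN_nonneg.
  reflexivity.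
Qed.

Section RadialSolution.

Variables (N : nat) (p : R) (u : pt -> R) (d1 : nat -> pt -> R) (d2 : nat -> nat -> pt -> R).
Hypotheses (N_pos : (1 <= N)%nat) (u_radial : forall x, u x = u (ray (normN N x))).
Hypothesis u_equation : forall x, in_ball N x ->
  (forall i j, (i < N)%nat -> (j < N)%nat ->
    partial_at u i x (d1 i x) /\ partial_at (d1 i) j x (d2 i j x) /\ contN_at N (d2 i j) x) /\
  - rsum N (fun i => d2 i i x) = Rpower (Rabs (u x)) (p - 1) * u x.

Lemma in_ball_ray r : Rabs r < 1 -> in_ball N (ray r).
Proof. intros. unfold in_ball. now rewrite normN_ray. Qed.

Lemma partial_u x i : in_ball N x -> (i < N)%nat -> partial_at u i x (d1 i x).
Proof. intros Hx Hi. apply (proj1 (u_equation x Hx) i i Hi Hi). Qed.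

Lemma partial_d1 x i : in_ball N x -> (i < N)%nat -> partial_at (d1 i) i x (d2 i i x).
Proof. intros Hx Hi. apply (proj1 (u_equation x Hx) i i Hi Hi). Qed.

Lemma u_ray_abs r : u (ray (Rabs r)) = u (ray r).
Proof. now rewrite (u_radial (ray r)), normN_ray. Qed.

Lemma u_shift_origin i y : (i < N)%nat -> u (shift origin i y) = u (ray y).
Proof. intros Hi. now rewrite u_radial, normN_shift_origin, u_ray_abs. Qed.

Lemma u_shift_ray r i y : (0 < i < N)%nat ->
  u (shift (ray r) i y) = u (ray (sqrt (r ^ 2 + y ^ 2))).
Proof. intros Hi. now rewrite u_radial, normN_shift_ray. Qed.

Lemma profile_deriv r : Rabs r < 1 -> derivable_pt_lim (fun s => u (ray s)) r (d1 0%nat (ray r)).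
Proof.
  intros Hr. apply derive_shift.
  pose proof (partial_u (ray r) 0 (in_ball_ray r Hr) N_pos) as H. unfold partial_at in H.
  rewrite (functional_extensionality _ (fun t => u (ray (r + t)))) in H
    by (intros t; now rewrite shift_ray).
  exact H.
Qed.

Lemma profile_deriv2 r : Rabs r < 1 ->
  derivable_pt_lim (fun s => d1 0%nat (ray s)) r (d2 0%nat 0%nat (ray r)).
Proof.
  intros Hr. apply derive_shift.
  pose proof (partial_d1 (ray r) 0 (in_ball_ray r Hr) N_pos) as H. unfold partial_at in H.
  rewrite (functional_extensionality _ (fun t => d1 0%nat (ray (r + t)))) in H
    by (intros t; now rewrite shift_ray).
  exact H.
Qed.

(* the profile is even, so its derivative vanishes at the centre *)
Lemma profile_deriv_0 : d1 0%nat (ray 0) = 0.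
Proof.
  assert (H0 : Rabs 0 < 1) by (rewrite Rabs_R0; lra).
  pose proof (profile_deriv 0 H0) as H1.
  assert (H2 : derivable_pt_lim (fun t => u (ray (- t))) 0 (d1 0%nat (ray 0) * -1)).
  { apply (derive_comp (fun s => u (ray s)) (fun t => - t)).
    - apply (derivable_pt_lim_opp (fun t => t)), derive_id.
    - now rewrite Ropp_0. }
  replace (fun t => u (ray (- t))) with (fun t => u (ray t)) in H2.
  - pose proof (uniqueness_limite _ _ _ _ H1 H2). lra.
  - apply functional_extensionality; intros t. now rewrite <- (u_ray_abs (- t)), Rabs_Ropp, u_ray_abs.
Qed.

Lemma laplacian_diag_origin i : (i < N)%nat -> d2 i i origin = d2 0%nat 0%nat (ray 0).
Proof.
  intros Hi.
  assert (Hd1 : forall t, Rabs t < 1 -> d1 i (shift origin i t) = d1 0%nat (ray t)).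
  { intros t Ht.
    assert (Hb : in_ball N (shift origin i t))
      by (unfold in_ball; rewrite normN_shift_origin; auto).
    pose proof (partial_u _ i Hb Hi) as H. unfold partial_at in H.
    rewrite (functional_extensionality _ (fun s => u (ray (t + s)))) in H
      by (intros s; now rewrite shift_shift, u_shift_origin).
    apply (uniqueness_limite (fun s => u (ray (t + s))) 0); [exact H|].
    apply (derive_shift (fun s => u (ray s))), profile_deriv, Ht. }
  assert (Hb : in_ball N origin)
    by (unfold in_ball; rewrite origin_ray, normN_ray, Rabs_R0 by auto; lra).
  pose proof (partial_d1 origin i Hb Hi) as H. unfold partial_at in H.
  apply (uniqueness_limite (fun t => d1 i (shift origin i t)) 0); [exact H|].
  apply (derive_local (fun s => d1 0%nat (ray s)) _ 0 _ 1); [lra| |].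
  - intros t Ht. rewrite Rminus_0_r in Ht. now rewrite Hd1.
  - apply profile_deriv2. rewrite Rabs_R0; lra.
Qed.

Lemma sqrt_sum_sq_range r t : 0 < r < 1 -> Rabs t < 1 - r ->
  0 < sqrt (r ^ 2 + t ^ 2) < 1.
Proof.
  intros Hr Ht. assert (t ^ 2 < (1 - r) ^ 2).
  { rewrite <- (pow2_abs t). pose proof (Rabs_pos t). nra. }
  split.
  - apply sqrt_lt_R0. nra.
  - rewrite <- sqrt_1. apply sqrt_lt_1_alt. split; nra.
Qed.

Lemma derive_sqrt_sum_sq r t : 0 < r ^ 2 + t ^ 2 ->
  derivable_pt_lim (fun y => sqrt (r ^ 2 + y ^ 2)) t (t / sqrt (r ^ 2 + t ^ 2)).
Proof.
  intros Hp. assert (Hs : 0 < sqrt (r ^ 2 + t ^ 2)) by (apply sqrt_lt_R0; auto).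
  eapply derive_eq.
  - apply (derive_comp sqrt (fun y => r ^ 2 + y ^ 2)).
    + apply derive_plus; [apply derive_const| apply derive_pow, derive_id].
    + apply derivable_pt_lim_sqrt; auto.
  - replace (INR 2) with 2 by (simpl; ring). simpl Nat.pred. field. lra.
Qed.

(* along the line [ray r + t e_i], [d1 i = phi'(rho t) * t / rho t] with [rho t = sqrt (r^2 + t^2)] *)
Lemma laplacian_diag_ray r i : 0 < r < 1 -> (0 < i < N)%nat ->
  d2 i i (ray r) = d1 0%nat (ray r) / r.
Proof.
  intros Hr Hi.
  set (rho := fun y => sqrt (r ^ 2 + y ^ 2)).
  assert (Hrho : forall t, Rabs t < 1 - r ->
     d1 i (shift (ray r) i t) = d1 0%nat (ray (rho t)) * (t / rho t)).
  { intros t Ht. pose proof (sqrt_sum_sq_range r t Hr Ht) as Hrange.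
    assert (Hb : in_ball N (shift (ray r) i t))
      by (unfold in_ball; rewrite normN_shift_ray; tauto).
    pose proof (partial_u _ i Hb ltac:(lia)) as H. unfold partial_at in H.
    rewrite (functional_extensionality _ (fun s => u (ray (rho (t + s))))) in H
      by (intros s; now rewrite shift_shift, u_shift_ray).
    apply (uniqueness_limite (fun s => u (ray (rho (t + s)))) 0); [exact H|].
    apply (derive_shift (fun s => u (ray (rho s)))).
    apply (derive_comp (fun z => u (ray z)) rho).
    + apply derive_sqrt_sum_sq. apply sqrt_lt_0_alt. rewrite sqrt_0. apply Hrange.
    + apply profile_deriv. rewrite Rabs_pos_eq; unfold rho; lra. }
  assert (Hb : in_ball N (ray r)) by (apply in_ball_ray; rewrite Rabs_pos_eq; lra).
  pose proof (partial_d1 _ i Hb ltac:(lia)) as H. unfold partial_at in H.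
  apply (uniqueness_limite (fun t => d1 i (shift (ray r) i t)) 0); [exact H|].
  assert (Hrho0 : rho 0 = r).
  { unfold rho. rewrite pow_i, Rplus_0_r, sqrt_pow2_abs, Rabs_pos_eq by (lia || lra).
    reflexivity. }
  assert (Hquot : exists l, derivable_pt_lim (fun t => d1 0%nat (ray (rho t)) / rho t) 0 l).
  { eexists. apply derive_div.
    - rewrite Hrho0; lra.
    - apply (derive_comp (fun z => d1 0%nat (ray z)) rho).
      + apply derive_sqrt_sum_sq. nra.
      + apply profile_deriv2. rewrite Hrho0, Rabs_pos_eq; lra.
    - apply derive_sqrt_sum_sq. nra. }
  destruct Hquot as [l Hl].
  apply (derive_local (fun t => t * (d1 0%nat (ray (rho t)) / rho t)) _ 0 _ (1 - r)); [lra| |].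
  - intros t Ht. rewrite Rminus_0_r in Ht. rewrite Hrho by exact Ht. unfold Rdiv; ring.
  - eapply derive_eq; [apply derive_mult; [apply derive_id| exact Hl]|].
    cbv beta. rewrite Hrho0. ring.
Qed.

Lemma radial_solution_ode :
  radial_ode N p (fun r => u (ray r)) (fun r => d1 0%nat (ray r)) (fun r => d2 0%nat 0%nat (ray r)).
Proof.
  split.
  - intros r Hr. apply profile_deriv. rewrite Rabs_pos_eq; lra.
  - intros r Hr. apply profile_deriv2. rewrite Rabs_pos_eq; lra.
  - exact profile_deriv_0.
  - intros r Hr.
    assert (Hb : in_ball N (ray r)) by (apply in_ball_ray; rewrite Rabs_pos_eq; lra).
    rewrite <- (proj2 (u_equation _ Hb)), (rsum_const_tail N _ (d1 0%nat (ray r) / r));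
      [| exact N_pos| intros k Hk; apply laplacian_diag_ray; [lra| lia]].
    now rewrite minus_INR by lia.
  - assert (Hb : in_ball N origin)
      by (unfold in_ball; rewrite origin_ray, normN_ray, Rabs_R0 by auto; lra).
    rewrite <- origin_ray, <- (proj2 (u_equation _ Hb)),
      (rsum_const_tail N _ (d2 0%nat 0%nat (ray 0)));
      [| exact N_pos| intros k Hk; apply laplacian_diag_origin; lia].
    rewrite laplacian_diag_origin, minus_INR by lia. simpl. ring.
Qed.

End RadialSolution.

(** * Sign on the first nodal ball *)

Lemma pos_before_zero phi r1 : 0 < phi 0 ->
  (forall s, 0 <= s < r1 -> continuity_pt phi s) -> (forall s, 0 <= s < r1 -> phi s <> 0) ->
  forall s, 0 <= s < r1 -> 0 < phi s.
Proof.
  intros H0 Hcont Hnz s Hs.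
  destruct (Rlt_or_le 0 (phi s)) as [Hpos|Hle]; [exact Hpos|]. exfalso.
  assert (Hs0 : 0 < s) by (destruct (Rle_lt_or_eq_dec 0 s ltac:(lra)) as [|<-]; lra).
  destruct (Ranalysis5.IVT_interv (fun t => - phi t) 0 s) as [z [Hz Hzero]]; try lra.
  - intros a Ha. apply continuity_pt_opp, Hcont. lra.
  - pose proof (Hnz s Hs). lra.
  - apply (Hnz z); lra.
Qed.

Definition clamp01 (t : R) : R := Rmax 0 (Rmin 1 t).

Lemma clamp01_lipschitz a b : Rabs (clamp01 a - clamp01 b) <= Rabs (a - b).
Proof. unfold clamp01, Rmax, Rmin. repeat destruct Rle_dec; split_Rabs; lra. Qed.

Lemma clamp01_id t : 0 <= t <= 1 -> clamp01 t = t.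
Proof. intros. unfold clamp01, Rmax, Rmin. repeat destruct Rle_dec; lra. Qed.

Lemma clamp01_range t : 0 <= clamp01 t <= 1.
Proof. unfold clamp01, Rmax, Rmin. repeat destruct Rle_dec; lra. Qed.

Lemma rsum_sq_diff_small n (h : nat -> R -> R) t :
  (forall k, (k < n)%nat -> continuity_pt (h k) t) ->
  forall eps, eps > 0 -> exists eta, eta > 0 /\ forall t', Rabs (t' - t) < eta ->
    rsum n (fun k => (h k t' - h k t) ^ 2) < eps.
Proof.
  induction n as [|n IH]; intros Hc eps Heps.
  - exists 1; split; [lra|]. intros; simpl; lra.
  - destruct (IH (fun k Hk => Hc k ltac:(lia)) (eps / 2) ltac:(lra)) as [e1 [He1 H1]].
    destruct (proj1 (continuity_pt_eps _ _) (Hc n ltac:(lia)) (sqrt (eps / 2))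
                ltac:(apply sqrt_lt_R0; lra)) as [e2 [He2 H2]].
    exists (Rmin e1 e2); split; [apply Rmin_pos; lra|]. intros t' Ht'.
    cbn [rsum]. specialize (H1 t' ltac:(apply Rlt_le_trans with (1 := Ht'); apply Rmin_l)).
    specialize (H2 t' ltac:(apply Rlt_le_trans with (1 := Ht'); apply Rmin_r)).
    assert ((h n t' - h n t) ^ 2 < eps / 2).
    { rewrite <- (pow2_abs (h n t' - h n t)).
      replace (eps / 2) with (sqrt (eps / 2) ^ 2) by (rewrite pow2_sqrt; lra).
      pose proof (Rabs_pos (h n t' - h n t)). nra. }
    lra.
Qed.

Lemma path_same_sign N u x y : (1 <= N)%nat -> (forall x, u x = u (ray (normN N x))) ->
  (forall z, in_cball N z -> contN_cball_at N u z) ->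
  path_connected_in N (nodal_set N u) x y -> 0 < u x * u y.
Proof.
  intros HN Hrad Hcont [g [Hg [Hends Hin]]].
  assert (Hcoord : forall z w, (forall k, (k < N)%nat -> z k = w k) -> u z = u w)
    by (intros z w Hzw; now rewrite (Hrad z), (Hrad w), (normN_ext N z w)).
  set (F := fun t => u (g (clamp01 t))).
  assert (HF : continuity F).
  { intros t. apply continuity_pt_eps. intros eps Heps.
    destruct (Hin (clamp01 t) (clamp01_range t)) as [Hb _].
    destruct (Hcont (g (clamp01 t)) ltac:(unfold in_cball, in_ball in *; lra) eps Heps)
      as [d [Hd Hd']].
    destruct (rsum_sq_diff_small N (fun k s => g (clamp01 s) k) t) with (eps := d ^ 2)
      as [eta [Heta Heta']].
    - intros k Hk. apply continuity_pt_eps. intros e He.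
      destruct (proj1 (continuity_pt_eps _ _) (Hg k Hk (clamp01 t)) e He) as [d2 [Hd2 Hd2']].
      exists d2; split; [exact Hd2|]. intros t' Ht'. apply Hd2'.
      apply Rle_lt_trans with (1 := clamp01_lipschitz t' t). exact Ht'.
    - apply pow_lt; lra.
    - exists eta; split; [exact Heta|]. intros t' Ht'. apply Hd'.
      + destruct (Hin (clamp01 t') (clamp01_range t')) as [Hb' _].
        unfold in_cball; unfold in_ball in Hb'; lra.
      + unfold distN, normN. rewrite <- (sqrt_pow2 d) by lra.
        apply sqrt_lt_1_alt. split; [apply rsum_nonneg; intros; apply pow2_ge_0|].
        exact (Heta' t' Ht'). }
  assert (HF0 : F 0 = u x) by (unfold F; rewrite clamp01_id by lra; apply Hcoord, Hends).
  assert (HF1 : F 1 = u y) by (unfold F; rewrite clamp01_id by lra; apply Hcoord, Hends).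
  destruct (Rlt_or_le 0 (u x * u y)) as [Hpos|Hle]; [exact Hpos|]. exfalso.
  destruct (IVT_cor F 0 1 HF ltac:(lra) ltac:(rewrite HF0, HF1; exact Hle)) as [z [_ Hz]].
  exact (proj2 (Hin (clamp01 z) (clamp01_range z)) Hz).
Qed.

(* with a single nodal region, a negative value of [u] would be path-connected to the
   positive value at the origin *)
Lemma profile_nonneg_one_region N u : (1 <= N)%nat -> (forall x, u x = u (ray (normN N x))) ->
  (forall z, in_cball N z -> contN_cball_at N u z) -> num_nodal_regions N u 1 ->
  0 < u origin -> forall s, 0 <= s < 1 -> 0 <= u (ray s).
Proof.
  intros HN Hrad Hcont [reps [_ [_ Hcover]]] Hu0 s Hs.
  destruct (Rle_or_lt 0 (u (ray s))) as [Hnn|Hneg]; [exact Hnn|]. exfalso.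
  assert (Hin0 : nodal_set N u origin)
    by (split; [unfold in_ball; rewrite origin_ray, normN_ray, Rabs_R0 by auto|]; lra).
  assert (Hins : nodal_set N u (ray s))
    by (split; [unfold in_ball; rewrite normN_ray, Rabs_pos_eq by (auto || lra)|]; lra).
  destruct (Hcover _ Hin0) as [k0 [Hk0 Hp0]], (Hcover _ Hins) as [k1 [Hk1 Hp1]].
  replace k0 with 0%nat in Hp0 by lia. replace k1 with 0%nat in Hp1 by lia.
  pose proof (path_same_sign N u _ _ HN Hrad Hcont Hp0).
  pose proof (path_same_sign N u _ _ HN Hrad Hcont Hp1).
  nra.
Qed.

Lemma profile_pos_first_nodal_ball N p m u dphi d2phi r1 : (3 <= N)%nat ->
  radial_ode N p (fun r => u (ray r)) dphi d2phi -> (forall x, u x = u (ray (normN N x))) ->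
  (forall z, in_cball N z -> contN_cball_at N u z) -> num_nodal_regions N u m ->
  0 < u origin -> first_nodal_radius N u m r1 -> forall s, 0 <= s < r1 -> 0 < u (ray s).
Proof.
  intros HN Hode Hrad Hcont Hnod Hu0 [[-> ->]|[_ [Hr1 [Hnz _]]]].
  - apply (phi_pos_of_nonneg N p _ dphi d2phi HN Hode); [now rewrite <- origin_ray|].
    apply (profile_nonneg_one_region N); auto; lia.
  - apply pos_before_zero.
    + now rewrite <- origin_ray.
    + intros s Hs. apply derivable_continuous_pt.
      exists (dphi s). apply (radial_ode_deriv Hode). lra.
    + intros s Hs. apply Hnz. rewrite normN_ray, Rabs_pos_eq by (lia || lra). lra.
Qed.

Theorem proposition3p5 :
  forall (N m : nat) (p : R) (u : pt -> R) (r1 : R),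
    (3 <= N)%nat -> (1 <= m)%nat -> 1 < p -> p < p_S N ->
    is_LE_solution N p u -> radial N u ->
    num_nodal_regions N u m -> u origin > 0 ->
    first_nodal_radius N u m r1 ->
    forall x, normN N x < r1 ->
      Rabs (u x) <=
        u origin /
        Rpower (1 + Rpower (u origin) (p - 1) / (INR N * (INR N - 2)) * (normN N x) ^ 2)
               ((INR N - 2) / 2).
Proof.
  intros N m p u r1 HN _ _ Hsub [_ [Hcont [d1 [d2 Heq]]]] Hrad Hnod Hu0 Hr1 x Hx.
  pose proof (radial_ray N u ltac:(lia) Hrad) as Hray.
  pose proof (radial_solution_ode N p u d1 d2 ltac:(lia) Hray Heq) as Hode.
  pose proof (profile_pos_first_nodal_ball N p m u _ _ r1 HN Hode Hray Hcont Hnod Hu0 Hr1)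
    as Hpos.
  assert (Hr1_range : 0 < r1 <= 1) by (destruct Hr1 as [[_ ->]|[_ [? _]]]; lra).
  assert (Hnx : 0 <= normN N x < r1) by (split; [apply normN_nonneg| exact Hx]).
  rewrite Hray, Rabs_pos_eq, origin_ray by (left; apply Hpos, Hnx).
  exact (profile_bound N p _ _ _ HN Hode r1 Hr1_range Hpos Hsub (normN N x) Hnx).
Qed.
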